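(* For every $n\ge 0$ and $i\in\{0,1\}$, the function $x\mapsto v_n(x,i)$ is nonincreasing on $\{0,1,2,\dots\}$; equivalently $\Delta_n(x,i)\ge 0$ for all $x\ge 0$.
   Context: Parameters: $\lambda>0$, $0<\mu_l<\mu_h$, $\delta=\mu_h-\mu_l$, $R\ge 0$, $c>0$, and $h:\{0,1,2,\dots\}\to\mathbb{R}$ nondecreasing and convex with $h(0)=0$; the rates are normalized so that $\lambda+\mu_h+\beta=1$ for a discount rate $\beta>0$. Finite-horizon value functions on $S=\{0,1,2,\dots\}\times\{0,1\}$: $v_0\equiv 0$ and for $n\ge 0$: $v_{n+1}(0,0)=\lambda v_n(0,1)+\mu_h v_n(0,0)$; $v_{n+1}(x,0)=-h(x)+\lambda v_n(x,1)+\mu_l v_n(x-1,0)+\max\{\delta v_n(x,0),-c+\delta v_n(x-1,0)\}$ for $x\ge1$; $v_{n+1}(x,1)=\max\{R+v_{n+1}(x+1,0),v_{n+1}(x,0)\}$ for $x\ge 0$. Define $\Delta_n(x,i)=v_n(x,i)-v_n(x+1,i)$. *)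

From Stdlib Require Import Reals.
Open Scope R_scope.

(* State (x, i) with i : bool, false = 0, true = 1.
   v lam muh mul R c h n x i = v_n(x,i). delta = muh - mul. *)
Fixpoint v (lam muh mul Rw c : R) (h : nat -> R) (n : nat) : nat -> bool -> R :=
  match n with
  | O => fun _ _ => 0
  | S m =>
      let vm := v lam muh mul Rw c h m in
      let a := fun x : nat =>
        match x with
        | O => lam * vm O true + muh * vm O false
        | S y => - h x + lam * vm x true + mul * vm y false
                 + Rmax ((muh - mul) * vm x false) (- c + (muh - mul) * vm y false)
        end in
      fun x i => if i then Rmax (Rw + a (S x)) (a x) else a x
  end.

Definition Delta_v (lam muh mul Rw c : R) (h : nat -> R) (n x : nat) (i : bool) : R :=
  v lam muh mul Rw c h n x i - v lam muh mul Rw c h n (S x) i.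

From Stdlib Require Import Reals Lra.
Open Scope R_scope.

(* The proof is an induction on n carrying the invariant "both components
   of v_n are nonincreasing in x":
   - [idle_update_nonincreasing]: the idle operator preserves the
     invariant; this uses only that the rates are nonnegative, that
     delta = muh - mul >= 0, that c >= 0 and that h is nondecreasing with
     h 0 = 0;
   - [admission_nonincreasing]: the admission choice of a nonincreasing
     function is nonincreasing, whatever the reward R. *)

Definition nonincreasing (f : nat -> R) : Prop := forall x : nat, f (S x) <= f x.

Lemma Rmax_le_mono (a b a' b' : R) : a <= a' -> b <= b' -> Rmax a b <= Rmax a' b'.
Proof.
  intros Ha Hb.
  apply Rle_trans with (Rmax a' b); [apply Rle_max_compat_r | apply Rle_max_compat_l]; assumption.
Qed.

Definition idle_update (lam muh mul c : R) (h : nat -> R) (w : nat -> bool -> R)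
  (x : nat) : R :=
  match x with
  | O => lam * w O true + muh * w O false
  | S y => - h x + lam * w x true + mul * w y false
           + Rmax ((muh - mul) * w x false) (- c + (muh - mul) * w y false)
  end.

Lemma v_succ_idle (lam muh mul Rw c : R) (h : nat -> R) (n x : nat) :
  v lam muh mul Rw c h (S n) x false
  = idle_update lam muh mul c h (v lam muh mul Rw c h n) x.
Proof. destruct x; reflexivity. Qed.

Lemma v_succ_admission (lam muh mul Rw c : R) (h : nat -> R) (n x : nat) :
  v lam muh mul Rw c h (S n) x true
  = Rmax (Rw + v lam muh mul Rw c h (S n) (S x) false) (v lam muh mul Rw c h (S n) x false).
Proof. destruct x; reflexivity. Qed.

(* At x = 0 the maximum is
   bounded by its first alternative at the empty queue, since rejecting
   the fast-server option costs c >= 0; for x >= 1 every term is compared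
   termwise, the holding cost h being nondecreasing. *)
Lemma idle_update_nonincreasing (lam muh mul c : R) (h : nat -> R)
  (w : nat -> bool -> R) :
  0 <= lam -> 0 <= mul -> mul <= muh -> 0 <= c ->
  h O = 0 -> (forall x : nat, h x <= h (S x)) ->
  nonincreasing (fun x => w x false) -> nonincreasing (fun x => w x true) ->
  nonincreasing (idle_update lam muh mul c h w).
Proof.
  intros Hlam Hmul Hdelta Hc Hh0 Hhmono Hw0 Hw1 [|y]; simpl.
  - assert (Harr : lam * w 1%nat true <= lam * w O true)
      by (apply Rmult_le_compat_l; [exact Hlam | apply Hw1]).
    assert (Hswitch : Rmax ((muh - mul) * w 1%nat false) (- c + (muh - mul) * w O false)
                      <= (muh - mul) * w O false).
    { apply Rmax_lub; [apply Rmult_le_compat_l; [lra | apply Hw0] | lra]. }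
    pose proof (Hhmono O).
    lra.
  - assert (Harr : lam * w (S (S y)) true <= lam * w (S y) true)
      by (apply Rmult_le_compat_l; [exact Hlam | apply Hw1]).
    assert (Hdep : mul * w (S y) false <= mul * w y false)
      by (apply Rmult_le_compat_l; [exact Hmul | apply Hw0]).
    assert (Hswitch : Rmax ((muh - mul) * w (S (S y)) false) (- c + (muh - mul) * w (S y) false)
                      <= Rmax ((muh - mul) * w (S y) false) (- c + (muh - mul) * w y false)).
    { apply Rmax_le_mono; [| apply Rplus_le_compat_l];
        apply Rmult_le_compat_l; try lra; apply Hw0. }
    pose proof (Hhmono (S y)).
    lra.
Qed.

Lemma admission_nonincreasing (Rw : R) (f : nat -> R) :
  nonincreasing f -> nonincreasing (fun x => Rmax (Rw + f (S x)) (f x)).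
Proof.
  intros Hf x.
  apply Rmax_le_mono; [apply Rplus_le_compat_l |]; apply Hf.
Qed.

Theorem lemma1 (lam muh mul beta Rw c : R) (h : nat -> R)
  (Hlam : 0 < lam) (Hmul : 0 < mul) (Hmulh : mul < muh)
  (Hbeta : 0 < beta) (Hnorm : lam + muh + beta = 1)
  (HR : 0 <= Rw) (Hc : 0 < c)
  (Hh0 : h O = 0)
  (Hhmono : forall x : nat, h x <= h (S x))
  (Hhconv : forall x : nat, h (S x) - h x <= h (S (S x)) - h (S x)) :
  forall (n x : nat) (i : bool), 0 <= Delta_v lam muh mul Rw c h n x i.
Proof.
  set (w := v lam muh mul Rw c h).
  assert (Hmono : forall n i, nonincreasing (fun x => w n x i)).
  { induction n as [|n IH].
    - intros i x; apply Rle_refl.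
    - assert (Hidle : nonincreasing (fun x => w (S n) x false)).
      { intro x; unfold w; rewrite !v_succ_idle.
        apply idle_update_nonincreasing; try lra; auto. }
      intros [|]; [| exact Hidle].
      intro x; unfold w; rewrite !v_succ_admission.
      exact (admission_nonincreasing Rw _ Hidle x). }
  intros n x i; unfold Delta_v.
  pose proof (Hmono n i x); unfold w in *; lra.
Qed.
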